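(* Let $q=2^t$. The $\mathbb{F}_2$-span of $\{\chi_\ell:\ell\in X_0\}\cup Z$ equals the $\mathbb{F}_2$-span of $\{\chi_\ell:\ell\in X_0\cup L_1\}$.
   Context: Let $q$ be a prime power and $V$ a $4$-dimensional vector space over $\mathbb{F}_q$ with a nonsingular alternating bilinear form and symplectic basis $e_0,e_1,e_2,e_3$ with $(e_0,e_3)=(e_1,e_2)=1$. $P$ is the set of $1$-dimensional subspaces of $V$ (points), $L$ the set of totally isotropic $2$-dimensional subspaces (lines). $p_0=\langle e_0\rangle$, $\ell_0=\langle e_0,e_1\rangle$; $P_1$ is the set of points $(a:b:c:d)$ with $d\ne0$; $L_1$ is the set of lines sharing no point with $\ell_0$. $\mathbb{F}_2[P]$ is the space of functions $P\to\mathbb{F}_2$, $\chi_\ell$ the characteristic function of a line $\ell$; $C(P,L_1)$ is the span of $\{\chi_\ell:\ell\in L_1\}$ in $\mathbb{F}_2[P]$, $\pi_{P_1}:\mathbb{F}_2[P]\to\mathbb{F}_2[P_1]$ is restriction to $P_1$, and $C(P_1,L_1)=\pi_{P_1}(C(P,L_1))$. $X_0$ is the set of the $q$ lines through $p_0$ other than $\ell_0$. $Z\subset\{\chi_\ell:\ell\in L_1\}$ is any set of characteristic functions of lines of $L_1$ which $\pi_{P_1}$ maps bijectively onto a basis of $C(P_1,L_1)$. *)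

From HB Require Import structures.
From mathcomp Require Import all_boot all_order all_algebra all_field.
Set Implicit Arguments. Unset Strict Implicit. Unset Printing Implicit Defensive.
Import GRing.Theory.
Local Open Scope ring_scope.

Section Geometry.
Variable F : finFieldType.

(* V = F^4 as row vectors; coordinates v 0 i for i = 0..3 w.r.t. e0..e3. *)
Definition Vec := 'rV[F]_4.

Definition ev (i : 'I_4) : Vec := delta_mx 0 i.

Definition sform (u v : Vec) : F :=
  u 0 0 * v 0 3 - u 0 3 * v 0 0 + u 0 1 * v 0 2 - u 0 2 * v 0 1.

Definition span1 (v : Vec) : {set Vec} := [set a *: v | a : F].
Definition span2 (u v : Vec) : {set Vec} := [set a *: u + b *: v | a : F, b : F].

Definition is_point (S : {set Vec}) : bool :=
  [exists v : Vec, (v != 0) && (S == span1 v)].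

Definition is_line (S : {set Vec}) : bool :=
  [exists u : Vec, exists v : Vec,
     [&& u != 0, v \notin span1 u,
         [forall x in span2 u v, forall y in span2 u v, sform x y == 0]
       & S == span2 u v]].

Definition Pt := {S : {set Vec} | is_point S}.
Definition Ln := {S : {set Vec} | is_line S}.

Definition p0 : {set Vec} := span1 (ev 0).
Definition l0 : {set Vec} := span2 (ev 0) (ev 1).

Definition in_P1 (p : Pt) : bool := [exists v in val p, v 0 3 != 0].
Definition P1 := {p : Pt | in_P1 p}.

Definition in_L1 (l : Ln) : bool :=
  ~~ [exists p : Pt, (val p \subset val l) && (val p \subset l0)].

Definition in_X0 (l : Ln) : bool := (p0 \subset val l) && (val l != l0).

Definition L1 : {set Ln} := [set l : Ln | in_L1 l].
Definition X0 : {set Ln} := [set l : Ln | in_X0 l].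

Definition F2P := {ffun Pt -> ('F_2)^o}.
Definition F2P1 := {ffun P1 -> ('F_2)^o}.

Definition chi (l : Ln) : F2P := [ffun p : Pt => ((val p \subset val l) : nat)%:R].

Definition piP1 (f : F2P) : F2P1 := [ffun p : P1 => f (val p)].

Definition CPL1 : {vspace F2P} := <<[seq chi l | l in L1]>>%VS.
Definition CP1L1 : {vspace F2P1} := <<[seq piP1 (chi l) | l in L1]>>%VS.

End Geometry.

From HB Require Import structures.
From mathcomp Require Import all_boot all_order all_algebra all_field.
From mathcomp Require Import ring.
Set Implicit Arguments. Unset Strict Implicit. Unset Printing Implicit Defensive.
Import GRing.Theory.
Local Open Scope ring_scope.

(* The inclusion from left to right is immediate, Z consisting of lines of L1.
   For the converse, the linear-algebra lemma [span_lift] reduces the claim,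
   since the restrictions of Z to P1 span C(P1, L1), to showing that every g in
   C(P, L1) vanishing on P1 lies in the span of X0 ([piP1_kernel_X0]).
   Such a g vanishes on l0 (lines of L1 miss l0), hence is supported on the
   affine chart of points (a:b:1:0).  The geometric input: for a symplectic
   frame (s1, s2, s3, s4), every totally isotropic line meets the hyperbolic
   lines <s1,s2> and <s3,s4> in the same number (0 or 1) of points
   ([line_meet_frame]), so over F_2 the sum of their indicators is orthogonal to
   every line, hence to g ([pairing_span_frame]).  The standard frame shows that
   the values of g on the column a = 0 sum to 0, and shear frames show that g is
   constant on each row b = y; therefore g = sum_y g(0:y:1:0) chi(M_y) with
   M_y = <e0, (0:y:1:0)> in X0 ([g_decomp]). *)

Section LinearSpans.
Variables (K : fieldType) (U : vectType K).

Lemma linear_span_vanish (W : lmodType K) (f : U -> W) (X : seq U) :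
  linear f -> {in X, forall x, f x = 0} -> {in <<X>>%VS, forall v, f v = 0}.
Proof.
move=> lin_f fX0 v /(coord_span (X := in_tuple X)) ->.
pose fL : {linear U -> W} := HB.pack f (GRing.isLinear.Build _ _ _ _ f lin_f).
rewrite -[f _]/(fL _) linear_sum big1 // => i _.
by rewrite linearZ /= fX0 ?scaler0 // mem_nth.
Qed.

Lemma linear_span_preimage (W : vectType K) (f : U -> W) (Zs : seq U) w :
  linear f -> w \in <<[seq f z | z <- Zs]>>%VS ->
  exists2 z, z \in <<Zs>>%VS & f z = w.
Proof.
move=> lin_f /(coord_span (X := in_tuple _)) ->.
pose fL : {linear U -> W} := HB.pack f (GRing.isLinear.Build _ _ _ _ f lin_f).
exists (\sum_i coord (in_tuple [seq f z | z <- Zs]) i w *: Zs`_i).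
  by apply: rpred_sum => i _; apply/rpredZ/memv_span/mem_nth; rewrite -(size_map f).
rewrite -[f _]/(fL _) linear_sum; apply: eq_bigr => i _.
by rewrite linearZ /= (nth_map 0) // -(size_map f).
Qed.

Lemma span_lift (W : vectType K) (f : U -> W) (X Zs Ls : seq U) :
  linear f ->
  {subset Zs <= <<Ls>>%VS} ->
  {subset [seq f v | v <- Ls] <= <<[seq f z | z <- Zs]>>%VS} ->
  (forall g, g \in <<Ls>>%VS -> f g = 0 -> g \in <<X>>%VS) ->
  (<<Ls>> <= <<X ++ Zs>>)%VS.
Proof.
move=> lin_f ZsLs fLs ker_f.
pose fL : {linear U -> W} := HB.pack f (GRing.isLinear.Build _ _ _ _ f lin_f).
apply/subvP => v vLs.
have fv : f v \in <<[seq f z | z <- Zs]>>%VS.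
  move: vLs => /(coord_span (X := in_tuple Ls)) ->.
  rewrite -[f _]/(fL _) linear_sum; apply: rpred_sum => i _.
  by rewrite linearZ; apply/rpredZ/fLs/map_f/mem_nth.
have [z zZs fz] := linear_span_preimage lin_f fv.
have /subvP sZsLs : (<<Zs>> <= <<Ls>>)%VS by apply/span_subvP.
have vzX : v - z \in <<X>>%VS.
  apply: ker_f; first exact/rpredB/sZsLs.
  by rewrite -[f _]/(fL _) linearB /= fz subrr.
have /subvP sXXZs : (<<X>> <= <<X ++ Zs>>)%VS.
  by apply/sub_span => x Xx; rewrite mem_cat Xx.
have /subvP sZsXZs : (<<Zs>> <= <<X ++ Zs>>)%VS.
  by apply/sub_span => x Zx; rewrite mem_cat Zx orbT.
by rewrite -(subrK z v); apply: rpredD; [apply: sXXZs | apply: sZsXZs].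
Qed.

End LinearSpans.

Lemma card_le1_eq (T : finType) (A C : {set T}) :
  (#|A| <= 1)%N -> (#|C| <= 1)%N -> (A == set0) = (C == set0) -> #|A| = #|C|.
Proof. by rewrite -!cards_eq0; case: #|A| => [|[|]]; case: #|C| => [|[|]]. Qed.

Lemma pchar_F2 : (2 \in [pchar 'F_2])%N.
Proof. exact: pchar_Fp. Qed.
#[local] Hint Resolve pchar_F2 : core.

Section Geometry.
Variable F : finFieldType.
Local Notation Vec := (Vec F).
Local Notation B := (@sform F).

Definition mkv (a b c d : F) : Vec := \row_(i < 4) [:: a; b; c; d]`_i.

Lemma mkv_coord a b c d :
  [/\ mkv a b c d 0 0 = a, mkv a b c d 0 1 = b, mkv a b c d 0 2 = c
    & mkv a b c d 0 3 = d].
Proof. by rewrite !mxE. Qed.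

Lemma vec_coordK (v : Vec) : mkv (v 0 0) (v 0 1) (v 0 2) (v 0 3) = v.
Proof.
apply/rowP => i; rewrite mxE.
by case: i => -[|[|[|[|k]]]] hk //=; congr (v 0 _); apply/val_inj.
Qed.

Lemma mkv_inj a b c d a' b' c' d' :
  mkv a b c d = mkv a' b' c' d' -> [/\ a = a', b = b', c = c' & d = d'].
Proof.
move=> e; have := mkv_coord a' b' c' d'; rewrite -e.
by case: (mkv_coord a b c d) => -> -> -> ->.
Qed.

Lemma mkv0 : mkv 0 0 0 0 = 0.
Proof. by apply/rowP => i; rewrite !mxE; case: i => -[|[|[|[|k]]]]. Qed.

Lemma mkvZ k a b c d : k *: mkv a b c d = mkv (k * a) (k * b) (k * c) (k * d).
Proof. by apply/rowP => i; rewrite !mxE; case: i => -[|[|[|[|k']]]]. Qed.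

Lemma mkvD a b c d a' b' c' d' :
  mkv a b c d + mkv a' b' c' d' = mkv (a + a') (b + b') (c + c') (d + d').
Proof. by apply/rowP => i; rewrite !mxE; case: i => -[|[|[|[|k]]]]. Qed.

Lemma sform_mkv a b c d a' b' c' d' :
  B (mkv a b c d) (mkv a' b' c' d') = a * d' - d * a' + b * c' - c * b'.
Proof. by rewrite /sform !mxE. Qed.

Lemma sformDl (u v w : Vec) : B (u + v) w = B u w + B v w.
Proof. rewrite /sform !mxE; ring. Qed.

Lemma sformZl a (u w : Vec) : B (a *: u) w = a * B u w.
Proof. rewrite /sform !mxE; ring. Qed.

Lemma sformC (u w : Vec) : B u w = - B w u.
Proof. rewrite /sform; ring. Qed.

Lemma sformvv (u : Vec) : B u u = 0.
Proof. rewrite /sform; ring. Qed.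

Lemma sform0l (w : Vec) : B 0 w = 0.
Proof. rewrite /sform !mxE; ring. Qed.

Lemma sformNl (u w : Vec) : B (- u) w = - B u w.
Proof. by rewrite -scaleN1r sformZl mulN1r. Qed.

Lemma sformBl (u v w : Vec) : B (u - v) w = B u w - B v w.
Proof. by rewrite sformDl sformNl. Qed.

Lemma sformZr a (u w : Vec) : B w (a *: u) = a * B w u.
Proof. by rewrite sformC sformZl -mulrN -sformC. Qed.

Lemma sformBr (u v w : Vec) : B w (u - v) = B w u - B w v.
Proof. by rewrite sformC sformBl opprB addrC -!sformC. Qed.


Lemma span1P (x v : Vec) : reflect (exists a, x = a *: v) (x \in span1 v).
Proof. by apply: (iffP imsetP) => [[a _ ->]|[a ->]]; exists a. Qed.

Lemma span2P (x u v : Vec) :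
  reflect (exists a b, x = a *: u + b *: v) (x \in span2 u v).
Proof.
by apply: (iffP imset2P) => [[a b _ _ ->]|[a [b ->]]]; [exists a, b | exists a b].
Qed.

Lemma span1_self (v : Vec) : v \in span1 v.
Proof. by apply/span1P; exists 1; rewrite scale1r. Qed.

Lemma span2_meml (u w : Vec) : u \in span2 u w.
Proof. by apply/span2P; exists 1, 0; rewrite scale1r scale0r addr0. Qed.

Lemma span2_memr (u w : Vec) : w \in span2 u w.
Proof. by apply/span2P; exists 0, 1; rewrite scale1r scale0r add0r. Qed.

Lemma span2_lin (u v x y : Vec) a b :
  x \in span2 u v -> y \in span2 u v -> a *: x + b *: y \in span2 u v.
Proof.
move=> /span2P [a1 [b1 ->]] /span2P [a2 [b2 ->]]; apply/span2P.
exists (a * a1 + b * a2), (a * b1 + b * b2).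
by rewrite !scalerDr !scalerA !scalerDl addrACA.
Qed.

Lemma span1Z (v : Vec) c : c != 0 -> span1 (c *: v) = span1 v.
Proof.
move=> c0; apply/setP => x; apply/span1P/span1P => -[a ->].
  by exists (a * c); rewrite scalerA.
by exists (a / c); rewrite scalerA divfK.
Qed.

Definition orth2 (a b : Vec) : {set Vec} := [set x | (B x a == 0) && (B x b == 0)].

Lemma orth2P x a b : reflect (B x a = 0 /\ B x b = 0) (x \in orth2 a b).
Proof. by rewrite inE; apply: (iffP andP) => -[/eqP ? /eqP ?]. Qed.

Lemma span1_sub (S : {set Vec}) v :
  (forall a x, x \in S -> a *: x \in S) -> (span1 v \subset S) = (v \in S).
Proof.
move=> sclS; apply/subsetP/idP => [-> //|Sv x /span1P [a ->]]; last exact: sclS.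
exact: span1_self.
Qed.

Lemma span1_sub_span2 (v u w : Vec) : (span1 v \subset span2 u w) = (v \in span2 u w).
Proof.
apply: span1_sub => a x Sx.
by have := span2_lin a 0 Sx Sx; rewrite scale0r addr0.
Qed.

Lemma span1_sub_orth2 (v a b : Vec) : (span1 v \subset orth2 a b) = (v \in orth2 a b).
Proof.
apply: span1_sub => c x /orth2P [xa xb].
by apply/orth2P; rewrite !sformZl xa xb !mulr0.
Qed.

Definition span1_subE := (span1_sub_span2, span1_sub_orth2).

Lemma ptP (p : Pt F) : exists2 v, v != 0 & val p = span1 v.
Proof. by case/existsP: (valP p) => v /andP [hv /eqP ->]; exists v. Qed.

Lemma lnP (l : Ln F) : exists u v,
  [/\ u != 0, v \notin span1 u,
      {in span2 u v &, forall x y, B x y = 0} & val l = span2 u v].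
Proof.
case/existsP: (valP l) => u /existsP [v /and4P [u0 vu /forallP iso /eqP ->]].
exists u, v; split => // x y xl yl.
by have /implyP /(_ xl) /forallP /(_ y) /implyP /(_ yl) /eqP := iso x.
Qed.

Definition e0v : Vec := mkv 1 0 0 0.

Lemma e0v_neq0 : e0v != 0.
Proof.
by apply/eqP => /rowP /(_ 0); rewrite !mxE /= => /eqP; rewrite oner_eq0.
Qed.

Lemma is_point_span1 (v : Vec) : v != 0 -> is_point (span1 v).
Proof. by move=> v0; apply/existsP; exists v; rewrite v0 eqxx. Qed.

(* The point spanned by a vector (an arbitrary point for the zero vector). *)
Definition mkPt (v : Vec) : Pt F :=
  insubd (exist _ (span1 e0v) (is_point_span1 e0v_neq0)) (span1 v).

Lemma val_mkPt v : v != 0 -> val (mkPt v) = span1 v.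
Proof. by move=> v0; rewrite /mkPt insubdK //; apply: is_point_span1. Qed.

Lemma span2_notin_span1 (u w x : Vec) : u != 0 -> w \notin span1 u ->
  exists2 z, z \in span2 u w & z \notin span1 x.
Proof.
move=> u0 wu; have [ux|] := boolP (u \in span1 x); last by exists u; rewrite ?span2_meml.
have [wx|] := boolP (w \in span1 x); last by exists w; rewrite ?span2_memr.
case/span1P: ux => a ua; case/span1P: wx => b wb.
have a0 : a != 0 by apply: contraNneq u0 => a0; rewrite ua a0 scale0r.
case/negP: wu; apply/span1P; exists (b / a).
by rewrite ua wb scalerA divfK.
Qed.

Definition line_meet (l : Ln F) (S : {set Vec}) : {set Pt F} :=
  [set p : Pt F | (val p \subset val l) && (val p \subset S)].

(* A hyperbolic frame: two orthogonal hyperbolic pairs (s1, s2), (s3, s4)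
   spanning the space, i.e. with trivial common orthogonal. *)
Definition sympl (s1 s2 s3 s4 : Vec) :=
  [/\ B s1 s2 = 1, B s3 s4 = 1
    & [/\ B s1 s3 = 0, B s1 s4 = 0, B s2 s3 = 0 & B s2 s4 = 0]].

Definition nondeg (s1 s2 s3 s4 : Vec) :=
  forall v, B v s1 = 0 -> B v s2 = 0 -> B v s3 = 0 -> B v s4 = 0 -> v = 0.

Lemma sympl_swap s1 s2 s3 s4 : sympl s1 s2 s3 s4 -> sympl s3 s4 s1 s2.
Proof.
case=> h12 h34 [h13 h14 h23 h24]; split => //.
by split; rewrite sformC ?h13 ?h14 ?h23 ?h24 oppr0.
Qed.

Lemma nondeg_swap s1 s2 s3 s4 : nondeg s1 s2 s3 s4 -> nondeg s3 s4 s1 s2.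
Proof. by move=> nd v h3 h4 h1 h2; apply: nd. Qed.

Section HyperbolicLine.
Variables s1 s2 s3 s4 : Vec.
Hypotheses (frame : sympl s1 s2 s3 s4) (nd : nondeg s1 s2 s3 s4).

(* The hyperbolic line H = <s1, s2>, described as the orthogonal of s3, s4. *)
Local Notation H := (orth2 s3 s4).

Lemma hyp_lin a b x y : x \in H -> y \in H -> a *: x + b *: y \in H.
Proof.
move=> /orth2P [x3 x4] /orth2P [y3 y4].
by apply/orth2P; rewrite !sformDl !sformZl x3 x4 y3 y4 !mulr0 addr0.
Qed.

Lemma hyp_eq x y : x \in H -> y \in H -> B x s1 = B y s1 -> B x s2 = B y s2 -> x = y.
Proof.
move=> /orth2P [x3 x4] /orth2P [y3 y4] e1 e2; apply/eqP; rewrite -subr_eq0; apply/eqP.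
by apply: nd; rewrite sformBl ?e1 ?e2 ?x3 ?y3 ?x4 ?y4 subrr.
Qed.

Lemma hyp_neq0 x : x \in H -> x != 0 -> (B x s1 != 0) || (B x s2 != 0).
Proof.
move=> Hx; apply: contraNT; rewrite negb_or !negbK => /andP [/eqP x1 /eqP x2].
have H0 : (0 : Vec) \in H by apply/orth2P; rewrite !sform0l.
by rewrite (hyp_eq Hx H0) // sform0l.
Qed.

Lemma sform_hyp x z : x \in H -> B z x = B x s2 * B z s1 - B x s1 * B z s2.
Proof.
case: frame => h12 _ [h13 h14 h23 h24] Hx.
have Hs : B x s2 *: s1 - B x s1 *: s2 \in H.
  by apply/orth2P; rewrite !sformBl !sformZl h13 h14 h23 h24 !mulr0 subrr.
rewrite -[in LHS](hyp_eq Hs Hx) ?sformBr ?sformZr // !sformBl !sformZl !sformvv.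
  by rewrite (sformC s2 s1) h12; ring.
by rewrite h12; ring.
Qed.

Lemma hyp_isotropic_prop x y : x \in H -> y \in H -> x != 0 -> B y x = 0 ->
  exists c, y = c *: x.
Proof.
move=> Hx Hy x0; rewrite (sform_hyp _ Hx) => /eqP; rewrite subr_eq0 => /eqP rel.
have Hcx c : c *: x \in H by rewrite -[_ *: x]addr0 -(scale0r y); apply: hyp_lin.
case/orP: (hyp_neq0 Hx x0) => nz.
- exists (B y s1 / B x s1); apply: hyp_eq => //; rewrite sformZl ?divfK //.
  by rewrite mulrAC [_ * B x s2]mulrC rel [B x s1 * _]mulrC mulfK.
- exists (B y s2 / B x s2); apply: hyp_eq => //; rewrite sformZl ?divfK //.
  by rewrite mulrAC [_ * B x s1]mulrC -rel [B x s2 * _]mulrC mulfK.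
Qed.

Lemma line_hyp_le1 (l : Ln F) : (#|line_meet l H| <= 1)%N.
Proof.
apply/card_le1_eqP => p p'; case: (lnP l) => u [w [_ _ iso el]].
case: (ptP p) => x x0 ep; case: (ptP p') => y y0 ep'.
rewrite !inE el ep ep' !span1_subE => /andP [xl Hx] /andP [yl Hy].
have [c yc] := hyp_isotropic_prop Hx Hy x0 (iso _ _ yl xl).
have c0 : c != 0 by apply: contraNneq y0 => c0; rewrite yc c0 scale0r.
by apply/val_inj; rewrite ep ep' yc span1Z.
Qed.

(* ... and if it meets H, it also meets the orthogonal hyperbolic line <s3, s4>:
   for x in l and H and z in l outside <x>, a suitable combination of z and x
   is orthogonal to s1 and s2. *)
Lemma line_hyp_swap (l : Ln F) :
  line_meet l H != set0 -> line_meet l (orth2 s1 s2) != set0.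
Proof.
case/set0Pn => p; rewrite inE; case: (lnP l) => u [w [u0 wu iso el]].
case: (ptP p) => x x0 ep; rewrite el ep !span1_subE => /andP [xl Hx].
have [z zl zx] := span2_notin_span1 x u0 wu.
have rel := iso _ _ zl xl; rewrite (sform_hyp _ Hx) in rel.
suff [a [b [a0 Hab]]] : exists a b, a != 0 /\ a *: z - b *: x \in orth2 s1 s2.
  have ab0 : a *: z - b *: x != 0.
    apply: contraNneq zx => /eqP; rewrite subr_eq0 => /eqP abx.
    by apply/span1P; exists (b / a); rewrite -mulrC -scalerA -abx scalerA mulVf ?scale1r.
  apply/set0Pn; exists (mkPt (a *: z - b *: x)).
  by rewrite inE el val_mkPt // !span1_subE Hab andbT -scaleNr span2_lin.
case/orP: (hyp_neq0 Hx x0) => nz.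
- exists (B x s1), (B z s1); split => //; apply/orth2P.
  rewrite !sformBl !sformZl; split; first ring.
  by rewrite -oppr0 -rel; ring.
- exists (B x s2), (B z s2); split => //; apply/orth2P.
  rewrite !sformBl !sformZl; split; last ring.
  by rewrite -rel; ring.
Qed.

End HyperbolicLine.

Lemma line_meet_frame s1 s2 s3 s4 (l : Ln F) :
  sympl s1 s2 s3 s4 -> nondeg s1 s2 s3 s4 ->
  #|line_meet l (orth2 s3 s4)| = #|line_meet l (orth2 s1 s2)|.
Proof.
move=> frame nd; have frame' := sympl_swap frame; have nd' := nondeg_swap nd.
apply: card_le1_eq; first by have := line_hyp_le1 frame nd l.
  by have := line_hyp_le1 frame' nd' l.
apply/idP/idP; apply: contraLR => ?.
  exact: (line_hyp_swap frame' nd').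
exact: (line_hyp_swap frame nd).
Qed.

Definition pairing (f : F2P F) (h : Pt F -> 'F_2) : 'F_2 := \sum_p f p * h p.

Lemma pairing_linear h : linear (fun f : F2P F => (pairing f h : ('F_2)^o)).
Proof.
move=> a f f'; rewrite /pairing scaler_sumr -big_split; apply: eq_bigr => p _ /=.
by rewrite !ffunE mulrDl scalerAl.
Qed.

Lemma eval_linear (p : Pt F) : linear (fun f : F2P F => f p).
Proof. by move=> a f f'; rewrite !ffunE. Qed.

Definition pt_ind (S : {set Vec}) (p : Pt F) : 'F_2 := (val p \subset S : nat)%:R.

Lemma pairing_chi_ind (l : Ln F) S : pairing (chi l) (pt_ind S) = #|line_meet l S|%:R.
Proof.
rewrite -sum1_card natr_sum [RHS]big_mkcond /=; apply: eq_bigr => p _.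
rewrite ffunE inE /pt_ind.
by case: (\val p \subset \val l); case: (\val p \subset S); rewrite ?mul1r ?mul0r.
Qed.

(* Test function of a frame: the sum of the indicators of its two hyperbolic
   lines. It is orthogonal to every line, hence to the whole line code. *)
Definition frame_test s1 s2 s3 s4 (p : Pt F) : 'F_2 :=
  pt_ind (orth2 s3 s4) p + pt_ind (orth2 s1 s2) p.

Lemma pairing_chi_frame s1 s2 s3 s4 (l : Ln F) :
  sympl s1 s2 s3 s4 -> nondeg s1 s2 s3 s4 ->
  pairing (chi l) (frame_test s1 s2 s3 s4) = 0.
Proof.
move=> frame nd; rewrite /pairing.
under eq_bigr => p _ do rewrite /frame_test mulrDr.
rewrite big_split /= -!/(pairing _ _) !pairing_chi_ind (line_meet_frame l frame nd).
exact: addrr_pchar2.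
Qed.

Lemma pairing_span_frame s1 s2 s3 s4 (ls : seq (Ln F)) g :
  sympl s1 s2 s3 s4 -> nondeg s1 s2 s3 s4 ->
  g \in <<[seq chi l | l <- ls]>>%VS -> pairing g (frame_test s1 s2 s3 s4) = 0.
Proof.
move=> frame nd; apply: (linear_span_vanish (pairing_linear _)) => _ /mapP [l _ ->].
exact: pairing_chi_frame.
Qed.

Definition wv (a b : F) : Vec := mkv a b 1 0.

Lemma wv_neq0 a b : wv a b != 0.
Proof.
by apply: contra_neq (@oner_neq0 F) => /(congr1 (fun v : Vec => v 0 2)); rewrite !mxE.
Qed.

Definition Pw (a b : F) : Pt F := mkPt (wv a b).

Lemma val_Pw a b : val (Pw a b) = span1 (wv a b).
Proof. exact/val_mkPt/wv_neq0. Qed.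

Lemma Pw_eq a b c d : (Pw a b == Pw c d) = (a == c) && (b == d).
Proof.
apply/eqP/andP => [e|[/eqP -> /eqP ->]] //.
have : wv a b \in val (Pw c d) by rewrite -e val_Pw span1_self.
rewrite val_Pw => /span1P [k]; rewrite /wv mkvZ => /mkv_inj [-> -> k1 _].
by move: k1; rewrite mulr1 => <-; rewrite !mul1r.
Qed.

Lemma l0_mem (v : Vec) : (v \in l0 F) = (v 0 2 == 0) && (v 0 3 == 0).
Proof.
apply/span2P/andP => [[a [b ->]]|[/eqP v2 /eqP v3]].
  by rewrite !mxE /= !mulr0 addr0.
exists (v 0 0), (v 0 1); rewrite -[LHS]vec_coordK v2 v3.
by apply/rowP => i; rewrite !mxE; case: i => -[|[|[|[|k]]]] //= _; ring.
Qed.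

Lemma Mline_mem (y : F) (v : Vec) :
  (v \in span2 e0v (wv 0 y)) = (v 0 1 == y * v 0 2) && (v 0 3 == 0).
Proof.
apply/span2P/andP => [[a [b ->]]|[/eqP v1 /eqP v3]].
  by rewrite !mxE /=; split; apply/eqP; ring.
exists (v 0 0), (v 0 2); rewrite -[LHS]vec_coordK v1 v3.
by apply/rowP => i; rewrite !mxE; case: i => -[|[|[|[|k]]]] //= _; ring.
Qed.

Lemma Mline_is_line (y : F) : is_line (span2 e0v (wv 0 y)).
Proof.
apply/existsP; exists e0v; apply/existsP; exists (wv 0 y); apply/and4P; split.
- exact: e0v_neq0.
- apply/span1P => -[k]; rewrite /wv /e0v mkvZ => /mkv_inj [_ _ + _].
  by rewrite mulr0 => /eqP; rewrite oner_eq0.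
- apply/forallP => x; apply/implyP => /span2P [a [b ->]].
  apply/forallP => z; apply/implyP => /span2P [c [d ->]].
  by rewrite /e0v /wv !mkvZ !mkvD sform_mkv; apply/eqP; ring.
- by [].
Qed.

Definition Mline (y : F) : Ln F := exist (fun S => is_line S) _ (Mline_is_line y).

Lemma Mline_X0 y : Mline y \in X0 F.
Proof.
rewrite inE /in_X0 /p0 /= span1_sub_span2 (Mline_mem y (ev F 0)) !mxE /= mulr0 !eqxx /=.
apply/eqP => e; have : wv 0 y \in l0 F by rewrite -e span2_memr.
by rewrite l0_mem !mxE /= oner_eq0.
Qed.

Lemma pt_cases (p : Pt F) :
  [\/ in_P1 p, val p \subset l0 F | exists a b, p = Pw a b].
Proof.
case: (ptP p) => v v0 ep.
have [v3|v3] := eqVneq (v 0 3) 0; last first.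
  by apply: Or31; apply/existsP; exists v; rewrite ep span1_self.
have [v2|v2] := eqVneq (v 0 2) 0.
  by apply: Or32; rewrite ep span1_sub_span2 l0_mem v2 v3 eqxx.
apply: Or33; exists (v 0 0 / v 0 2), (v 0 1 / v 0 2); apply/val_inj.
rewrite val_Pw ep -(span1Z (wv _ _) v2) -[v in span1 v]vec_coordK /wv mkvZ v3.
by congr (span1 (mkv _ _ _ _)); rewrite ?mulr1 ?mulr0 // mulrC divfK.
Qed.

Lemma chi_Mline_Pw y a b : chi (Mline y) (Pw a b) = (b == y)%:R.
Proof. by rewrite ffunE val_Pw /= span1_sub_span2 Mline_mem !mxE /= mulr1 eqxx andbT. Qed.

Lemma chi_Mline_P1 y (p : Pt F) : in_P1 p -> chi (Mline y) p = 0.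
Proof.
case/existsP => v /andP [pv v3]; rewrite ffunE.
suff /negbTE -> : ~~ (val p \subset val (Mline y)) by [].
by apply/negP => /subsetP sub; move: (sub v pv); rewrite Mline_mem (negbTE v3) andbF.
Qed.

(* All lines M_y meet l0 in the same point p0. *)
Lemma chi_Mline_l0 y (p : Pt F) : val p \subset l0 F -> chi (Mline y) p = chi (Mline 0) p.
Proof.
case: (ptP p) => v _ ep; rewrite !ffunE ep /= !span1_sub_span2 l0_mem => /andP [/eqP v2 v3].
by rewrite !Mline_mem v2 !mulr0.
Qed.

Lemma nondeg_coord s1 s2 s3 s4 :
  (forall a b c d, let v := mkv a b c d in
     B v s1 = 0 -> B v s2 = 0 -> B v s3 = 0 -> B v s4 = 0 ->
     [/\ a = 0, b = 0, c = 0 & d = 0]) ->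
  nondeg s1 s2 s3 s4.
Proof.
move=> coord0 v; rewrite -(vec_coordK v) => h1 h2 h3 h4.
by case: (coord0 _ _ _ _ h1 h2 h3 h4) => -> -> -> ->; rewrite mkv0.
Qed.

Lemma std_frame :
  let s1 := mkv 1 0 0 0 in let s2 := mkv 0 0 0 1 in
  let s3 := mkv 0 1 0 0 in let s4 := mkv 0 0 1 0 in
  sympl s1 s2 s3 s4 /\ nondeg s1 s2 s3 s4.
Proof.
split; first by split; [| | split]; rewrite sform_mkv; ring.
apply: nondeg_coord => a b c d /=; rewrite !sform_mkv => h1 h2 h3 h4.
split; [rewrite -h2 | rewrite -h4 | rewrite -oppr0 -h3 | rewrite -oppr0 -h1]; ring.
Qed.

(* A frame whose hyperbolic line <s1, s2> contains exactly the chart points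
   (0:y:1:0) and (x:y:1:0). *)
Lemma shear_frame x y : x != 0 ->
  let s1 := mkv x y 1 0 in let s2 := mkv 0 0 0 x^-1 in
  let s3 := mkv 0 y 1 0 in let s4 := mkv 0 (-1) 0 (- x^-1) in
  sympl s1 s2 s3 s4 /\ nondeg s1 s2 s3 s4.
Proof.
move=> x0; split; first by split; [| | split]; rewrite sform_mkv; field.
apply: nondeg_coord => a b c d /=; rewrite !sform_mkv => h1 h2 h3 h4.
have a0 : a = 0 by apply: (mulIf (invr_neq0 x0)); rewrite mul0r -h2; ring.
have c0 : c = 0 by rewrite -h4 a0; ring.
have b0 : b = 0 by rewrite -h3 c0; ring.
split=> //; apply: (mulIf x0); rewrite mul0r -oppr0 -h1 a0 b0 c0; ring.
Qed.

Lemma sum_eq_indicator (b : F) : \sum_(y : F) ((b == y) : nat)%:R = 1 :> 'F_2.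
Proof.
by rewrite (bigD1 b) //= eqxx big1 ?addr0 // => y yb; rewrite eq_sym (negbTE yb).
Qed.

Section LineCodeKernel.
Variable g : F2P F.
Hypothesis g_L1 : g \in <<[seq chi l | l in L1 F]>>%VS.
Hypothesis g_P1 : forall q : P1 F, g (val q) = 0.

(* g vanishes on l0, since no line of L1 meets l0 ... *)
Lemma g_on_l0 (p : Pt F) : val p \subset l0 F -> g p = 0.
Proof.
move=> pl0; apply: (linear_span_vanish (eval_linear p) _ g_L1) => _ /mapP [l + ->].
rewrite mem_enum inE ffunE => lL1.
case: (boolP (val p \subset val l)) => // pl; case/negP: lL1.
by apply/existsP; exists p; rewrite pl pl0.
Qed.

Lemma g_support (p : Pt F) : g p != 0 -> exists a b, p = Pw a b.
Proof.
move=> gp0; have [pP1|pl0|//] := pt_cases p; case/eqP: gp0; last exact: g_on_l0.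
exact: (g_P1 (exist (fun p => in_P1 p) p pP1)).
Qed.

Lemma pairing_chart (I : finType) (Q : I -> Pt F) (h : Pt F -> 'F_2) :
  (forall a b, h (Pw a b) = \sum_i (Pw a b == Q i)%:R) ->
  pairing g h = \sum_i g (Q i).
Proof.
move=> hQ; rewrite /pairing.
transitivity (\sum_p g p * \sum_i ((p == Q i) : nat)%:R).
  apply: eq_bigr => p _; case: (eqVneq (g p) 0) => [->|/g_support [a [b ->]]].
    by rewrite !mul0r.
  by rewrite hQ.
under eq_bigr => p _ do rewrite mulr_sumr.
rewrite exchange_big; apply: eq_bigr => i _.
rewrite (bigD1 (Q i)) //= eqxx mulr1 big1 ?addr0 // => p /negbTE ->.
by rewrite mulr0.
Qed.

(* The standard frame gives: the values of g along the column a = 0 sum to 0. *)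
Lemma g_column_sum : \sum_(y : F) g (Pw 0 y) = 0.
Proof.
case: std_frame => frame nd.
pose h := frame_test (mkv 1 0 0 0) (mkv 0 0 0 1) (mkv 0 1 0 0) (mkv 0 0 1 0).
rewrite -(pairing_chart (Q := fun y => Pw 0 y) (h := h)).
  exact: pairing_span_frame frame nd g_L1.
move=> a b; rewrite /h /frame_test /pt_ind val_Pw !span1_sub_orth2 !inE /wv !sform_mkv.
rewrite !(mulr0, mul0r, mulr1, subr0, addr0, add0r, oppr0, sub0r) oppr_eq0 oner_eq0 eqxx /= add0r.
under eq_bigr => y _ do rewrite Pw_eq.
by case: (a == 0) => /=; rewrite ?sum_eq_indicator // big1.
Qed.

(* The shear frames give: g is constant along the rows b = y of the chart. *)
Lemma g_row_const x y : g (Pw x y) = g (Pw 0 y).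
Proof.
have [-> //|x0] := eqVneq x 0; have [frame nd] := shear_frame y x0.
pose h := frame_test (mkv x y 1 0) (mkv 0 0 0 x^-1) (mkv 0 y 1 0) (mkv 0 (-1) 0 (- x^-1)).
have := pairing_span_frame frame nd g_L1.
rewrite -/h (pairing_chart (Q := fun i : bool => if i then Pw x y else Pw 0 y)).
  by rewrite big_bool /= => /eqP; rewrite addr_eq0 => /eqP ->; rewrite oppr_pchar2.
move=> a b; rewrite big_bool /h /frame_test /pt_ind val_Pw !span1_sub_orth2 !inE !Pw_eq.
rewrite /wv !sform_mkv.
have -> : a * 0 - 0 * 0 + b * 1 - 1 * y = b - y by ring.
have -> : a * - x^-1 - 0 * 0 + b * 0 - 1 * -1 = 1 - a / x by ring.
have -> : a * 0 - 0 * x + b * 1 - 1 * y = b - y by ring.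
have -> : a * x^-1 - 0 * 0 + b * 0 - 1 * 0 = a / x by ring.
rewrite !subr_eq0 mulf_eq0 invr_eq0 (negbTE x0) orbF.
have -> : (1 == a / x) = (a == x).
  by apply/eqP/eqP => [ax|->]; rewrite ?divff // -[a](divfK x0) -ax mul1r.
by rewrite andbC [(b == y) && _]andbC.
Qed.

Lemma g_decomp : g = \sum_(y : F) g (Pw 0 y) *: chi (Mline y).
Proof.
apply/ffunP => p; rewrite sum_ffunE; under eq_bigr => y _ do rewrite ffunE.
have [pP1|pl0|[a [b ->]]] := pt_cases p.
- rewrite (g_P1 (exist (fun p => in_P1 p) p pP1)) big1 // => y _.
  by rewrite chi_Mline_P1 // scaler0.
- under eq_bigr => y _ do rewrite (chi_Mline_l0 y pl0).
  by rewrite -scaler_suml g_column_sum scale0r g_on_l0.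
- rewrite g_row_const (bigD1 b) //= chi_Mline_Pw eqxx big1 ?addr0 => [|y yb].
    exact: (esym (mulr1 _)).
  by rewrite chi_Mline_Pw eq_sym (negbTE yb) scaler0.
Qed.

Lemma g_in_X0 : g \in <<[seq chi l | l in X0 F]>>%VS.
Proof.
rewrite g_decomp; apply: rpred_sum => y _; apply/rpredZ/memv_span.
by apply: map_f; rewrite mem_enum Mline_X0.
Qed.

End LineCodeKernel.

Lemma piP1_kernel_X0 g :
  g \in <<[seq chi l | l in L1 F]>>%VS -> piP1 g = 0 ->
  g \in <<[seq chi l | l in X0 F]>>%VS.
Proof.
move=> gL1 g0; apply: g_in_X0 gL1 _ => q.
by have := congr1 (fun f : F2P1 F => f q) g0; rewrite !ffunE.
Qed.

Lemma piP1_linear : linear (@piP1 F).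
Proof. by move=> a f f'; apply/ffunP => q; rewrite !ffunE. Qed.

End Geometry.

Theorem corollary14 (t : nat) (F : finFieldType) (hq : #|F| = (2 ^ t)%N)
  (Z : {set F2P F})
  (hZsub : forall f, f \in Z -> exists2 l : Ln F, l \in L1 F & f = chi l)
  (hZinj : {in Z &, injective (@piP1 F)})
  (hZbasis : basis_of (CP1L1 F) [seq piP1 f | f <- enum Z]) :
  <<[seq chi l | l in X0 F] ++ enum Z>>%VS =
  <<[seq chi l | l in X0 F :|: L1 F]>>%VS.
Proof.
set X := [seq chi l | l in X0 F]; set Ls := [seq chi l | l in L1 F].
have chi_mem (A : {set Ln F}) l : l \in A -> chi l \in <<[seq chi l | l in A]>>%VS.
  by move=> lA; apply/memv_span/map_f; rewrite mem_enum.
have Z_L1 : {subset enum Z <= <<Ls>>%VS}.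
  by move=> f; rewrite mem_enum => /hZsub [l lL1 ->]; apply: chi_mem.
have L1_sub : (<<Ls>> <= <<X ++ enum Z>>)%VS.
  apply: (span_lift (f := @piP1 F)) => //; [exact: piP1_linear | | exact: piP1_kernel_X0].
  move=> _ /mapP [f /mapP [l lL1 ->] ->]; case/andP: hZbasis => /eqP -> _.
  by apply/memv_span/map_f.
apply/eqP; rewrite eqEsubv; apply/andP; split; apply/span_subvP => f.
- rewrite mem_cat => /orP [/mapP [l]|]; rewrite mem_enum.
    by move=> lX0 ->; apply: chi_mem; rewrite inE lX0.
  by case/hZsub => l lL1 ->; apply: chi_mem; rewrite inE lL1 orbT.
- case/mapP => l; rewrite mem_enum inE => /orP [lX0|lL1] ->.
    by apply/memv_span; rewrite mem_cat map_f ?mem_enum.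
  exact/(subvP L1_sub)/chi_mem.
Qed.
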